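(* Let $C$ be a set of clients, $F$ a set of facilities, $o_f\ge0$ opening costs, $d(c,f)\ge 0$ connection costs, and $p_c\in[0,1]$ activation probabilities, and let $g_\pi(B)=1-\prod_{c\in B}(1-p_c)$ for $B\subseteq C$. Let $OPT_{\text{CONF-LP-FL}}$ be the optimum of the linear program $$\min \sum_{f\in F}o_f\sum_{B\subseteq C}y_B^f g_\pi(B)+\sum_{c\in C}\sum_{f\in F}p_c\, d(c,f)\sum_{B\subseteq C:\,c\in B}y_B^f$$ subject to $\sum_{f\in F}\sum_{B\subseteq C:\,c\in B}y_B^f\ge 1$ for all $c\in C$ and $y_B^f\ge 0$ for all $f\in F$, $B\subseteq C$; and let $OPT_{\text{LP-FL}}$ be the optimum of $$\min \sum_{f\in F}o_f\max_{c\in C}x_c^f+\sum_{f\in F}o_f\sum_{c\in C}p_c\bar x_c^f+\sum_{c\in C}\sum_{f\in F}p_c\,d(c,f)(x_c^f+\bar x_c^f)$$ subject to $\sum_{f\in F}(x_c^f+\bar x_c^f)\ge 1$ for all $c\in C$ and $x_c^f,\bar x_c^f\ge 0$. Then $OPT_{\text{LP-FL}}\le\frac{e}{e-1}\,OPT_{\text{CONF-LP-FL}}$. *)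

From HB Require Import structures.
From mathcomp Require Import all_boot all_order all_algebra.
From mathcomp Require Import all_classical all_reals all_analysis.
Set Implicit Arguments. Unset Strict Implicit. Unset Printing Implicit Defensive.
Import Order.TTheory GRing.Theory Num.Theory.
Local Open Scope ring_scope.

Section FL.
Variables (R : realType) (C F : finType).
Variables (o : F -> R) (d : C -> F -> R) (p : C -> R).

Definition g_pi (B : {set C}) : R := 1 - \prod_(c in B) (1 - p c).

Definition conf_feasible (y : F -> {set C} -> R) : Prop :=
  (forall c : C, 1 <= \sum_(f : F) \sum_(B : {set C} | c \in B) y f B) /\
  (forall f B, 0 <= y f B).

Definition conf_obj (y : F -> {set C} -> R) : R :=
  \sum_(f : F) o f * \sum_(B : {set C}) y f B * g_pi B
  + \sum_(c : C) \sum_(f : F) p c * d c f * \sum_(B : {set C} | c \in B) y f B.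

Definition lp_feasible (x xb : F -> C -> R) : Prop :=
  (forall c : C, 1 <= \sum_(f : F) (x f c + xb f c)) /\
  (forall f c, 0 <= x f c) /\ (forall f c, 0 <= xb f c).

(* max over c in C of x_c^f (taken as 0 when C is empty; x >= 0 anyway) *)
Definition lp_obj (x xb : F -> C -> R) : R :=
  \sum_(f : F) o f * \big[Num.max/0]_(c : C) x f c
  + \sum_(f : F) o f * \sum_(c : C) p c * xb f c
  + \sum_(c : C) \sum_(f : F) p c * d c f * (x f c + xb f c).

(* optima as infima in the extended reals (+oo if infeasible) *)
Definition OPT_CONF : \bar R :=
  ereal_inf [set (conf_obj y)%:E | y in conf_feasible].

Definition OPT_LP : \bar R :=
  ereal_inf [set (lp_obj xx.1 xx.2)%:E | xx in [set xx | lp_feasible xx.1 xx.2]].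

End FL.

From HB Require Import structures.
From mathcomp Require Import all_boot all_order all_algebra.
From mathcomp Require Import all_classical all_reals all_analysis.
From mathcomp Require Import ring lra.
Set Implicit Arguments. Unset Strict Implicit. Unset Printing Implicit Defensive.
Import Order.TTheory GRing.Theory Num.Theory.
Local Open Scope ring_scope.

(* Round a configuration solution y by splitting each configuration B
   according to its expected number of active clients s_B = sum_(c in B) p_c.
   If s_B >= 1, B is paid for in the max-term (x), at cost y_B; otherwise its
   clients are paid individually (xb), at cost y_B s_B.  Either way the cost is
   y_B min(1, s_B), while the configuration LP pays y_B g(B) >= y_B (1 - e^{-s_B});
   concavity of 1 - e^{-s} gives min(1, s) <= e/(e-1) (1 - e^{-s}). *)

Section ExpBounds.
Variable R : realType.
Local Notation k := (expR 1 / (expR 1 - 1) : R).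

Lemma expR1_gt1 : 1 < expR 1 :> R.
Proof. by rewrite expR_gt1. Qed.

Lemma e_ratio_gt0 : 0 < k.
Proof. by have := expR1_gt1 => e_gt1; apply: divr_gt0; lra. Qed.

Lemma e_ratio_ge1 : 1 <= k.
Proof. by have := expR1_gt1 => e_gt1; rewrite ler_pdivlMr; lra. Qed.

Lemma e_ratio_onem_expRN1 : k * (1 - expR (-1)) = 1.
Proof.
have := expR1_gt1; rewrite expRN => e_gt1.
by field; rewrite gt_eqF ?subr_eq0 ?gt_eqF //; lra.
Qed.

Lemma expRN_le_chord (s : R) : 0 <= s <= 1 -> expR (- s) <= 1 - s * (1 - expR (-1)).
Proof.
move=> /andP[s_ge0 s_le1].
have s01 : Itv.spec (@Itv.num_sem R) (Itv.Real `[0%Z, 1%Z]) s.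
  by rewrite /= /Itv.num_sem /= in_itv /= s_ge0 s_le1 ger0_real.
have := convex_expR (Itv.mk s01) (-1 : R^o) (0 : R^o).
rewrite !convRE /= expR0 mulr0 addr0 mulrN1 => /le_trans; apply.
by rewrite /unstable.onem; lra.
Qed.

Lemma min1_le_e_ratio_onem_expRN (s : R) : 0 <= s -> Num.min 1 s <= k * (1 - expR (- s)).
Proof.
move=> s_ge0; rewrite -[leLHS]mul1r -[X in X * _]e_ratio_onem_expRN1 -(mulrA k).
apply: ler_wpM2l; first exact/ltW/e_ratio_gt0.
have [s_le1|s_gt1] := leP s 1.
  by have := expRN_le_chord (s := s); rewrite s_ge0 s_le1 => /(_ isT); lra.
rewrite mulr1 lerB // ler_expR lerN2; exact: ltW.
Qed.

Lemma prod_onem_le_expR_sum (I : Type) (r : seq I) (P : pred I) (q : I -> R) :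
  (forall i, P i -> q i <= 1) ->
  \prod_(i <- r | P i) (1 - q i) <= expR (- \sum_(i <- r | P i) q i).
Proof.
move=> q_le1; rewrite -sumrN expR_sum; apply: ler_prod => i Pi.
by rewrite subr_ge0 q_le1 //= expR_ge1Dx.
Qed.

End ExpBounds.

Section Rounding.
Variables (R : realType) (C F : finType).
Variables (o : F -> R) (d : C -> F -> R) (p : C -> R).
Hypothesis ho : forall f, 0 <= o f.
Hypothesis hd : forall c f, 0 <= d c f.
Hypothesis hp : forall c, 0 <= p c <= 1.
Local Notation k := (expR 1 / (expR 1 - 1) : R).

Lemma min1_sum_le_e_ratio_g_pi (B : {set C}) :
  Num.min 1 (\sum_(c in B) p c) <= k * g_pi p B.
Proof.
have p_ge0 c : 0 <= p c by case/andP: (hp c).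
have p_le1 c : p c <= 1 by case/andP: (hp c).
have sum_ge0 : 0 <= \sum_(c in B) p c by exact: sumr_ge0.
apply: le_trans (min1_le_e_ratio_onem_expRN sum_ge0) _.
apply: ler_wpM2l; first exact/ltW/e_ratio_gt0.
by rewrite lerB // prod_onem_le_expR_sum.
Qed.

Definition large_config (B : {set C}) : bool := 1 <= \sum_(c in B) p c.

Variable y : F -> {set C} -> R.
Hypothesis hy : conf_feasible y.

Definition round_x (f : F) (c : C) : R :=
  \sum_(B : {set C} | (c \in B) && large_config B) y f B.

Definition round_xb (f : F) (c : C) : R :=
  \sum_(B : {set C} | (c \in B) && ~~ large_config B) y f B.

Lemma round_xD f c : round_x f c + round_xb f c = \sum_(B : {set C} | c \in B) y f B.
Proof. by rewrite [RHS](bigID large_config). Qed.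

Lemma round_feasible : lp_feasible round_x round_xb.
Proof.
have [cover y_ge0] := hy.
split; first by move=> c; under eq_bigr do rewrite round_xD; exact: cover.
by split=> f c; apply: sumr_ge0.
Qed.

Lemma max_round_x_le f :
  \big[Num.max/0]_(c : C) round_x f c <= \sum_(B : {set C} | large_config B) y f B.
Proof.
have [_ y_ge0] := hy.
apply: bigmax_le => [|c _]; first exact: sumr_ge0.
rewrite /round_x big_mkcond [leRHS]big_mkcond /=; apply: ler_sum => B _.
by case: (c \in B); case: large_config.
Qed.

Lemma sum_p_round_xb f :
  \sum_(c : C) p c * round_xb f c
  = \sum_(B : {set C} | ~~ large_config B) y f B * \sum_(c in B) p c.
Proof.
under eq_bigr do rewrite /round_xb mulr_sumr.
rewrite (exchange_big_dep (fun B => ~~ large_config B)) => [|c B _ /andP[]//].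
apply: eq_bigr => B small; rewrite mulr_sumr.
by apply: eq_big => [c|c _]; rewrite ?small ?andbT // mulrC.
Qed.

Lemma facility_cost_round_le f :
  \big[Num.max/0]_(c : C) round_x f c + \sum_(c : C) p c * round_xb f c
  <= k * \sum_(B : {set C}) y f B * g_pi p B.
Proof.
have [_ y_ge0] := hy.
have min_cost : \big[Num.max/0]_(c : C) round_x f c + \sum_(c : C) p c * round_xb f c
    <= \sum_(B : {set C}) y f B * Num.min 1 (\sum_(c in B) p c).
  rewrite (bigID large_config) sum_p_round_xb /=; apply: lerD.
    apply: le_trans (max_round_x_le f) _; apply/ler_sum => B large.
    by rewrite (min_l large) mulr1.
  by apply/ler_sum => B small; rewrite min_r //; apply: ltW; rewrite ltNge.
apply: le_trans min_cost _; rewrite mulr_sumr; apply: ler_sum => B _.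
by rewrite mulrCA; apply: ler_wpM2l => //; exact: min1_sum_le_e_ratio_g_pi.
Qed.

Lemma lp_obj_round_le : lp_obj o d p round_x round_xb <= k * conf_obj o d p y.
Proof.
have [_ y_ge0] := hy.
rewrite /lp_obj /conf_obj -big_split /= mulrDr.
under [X in _ + X]eq_bigr do under eq_bigr do rewrite round_xD.
apply: lerD.
  rewrite mulr_sumr; apply: ler_sum => f _.
  by rewrite -mulrDr mulrCA; apply: ler_wpM2l => //; exact: facility_cost_round_le.
rewrite -[leLHS]mul1r; apply: ler_wpM2r; last exact: e_ratio_ge1.
apply: sumr_ge0 => c _; apply: sumr_ge0 => f _; case/andP: (hp c) => p_ge0 _.
by rewrite !mulr_ge0 // sumr_ge0.
Qed.

End Rounding.

Lemma ereal_inf_image_le_pZl (R : realType) (T U : Type) (A : set T) (B : set U)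
    (f : T -> R) (g : U -> R) (k : R) :
  0 < k -> (forall u, B u -> exists2 t, A t & f t <= k * g u) ->
  (ereal_inf [set (f t)%:E | t in A] <= k%:E * ereal_inf [set (g u)%:E | u in B])%E.
Proof.
move=> k_gt0 dominated; rewrite -ereal_inf_pZl //.
apply/ereal_infP => _ [_ [u Bu <-] <-]; have [t At le_ft] := dominated u Bu.
apply: (@le_trans _ _ (f t)%:E); first by apply: ereal_inf_lbound; exists t.
by rewrite -EFinM lee_fin.
Qed.

Theorem lemma5 (R : realType) (C F : finType)
  (o : F -> R) (d : C -> F -> R) (p : C -> R)
  (ho : forall f, 0 <= o f)
  (hd : forall c f, 0 <= d c f)
  (hp : forall c, 0 <= p c <= 1) :
  (OPT_LP o d p <= ((expR 1 / (expR 1 - 1))%:E * OPT_CONF o d p)%E)%E.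
Proof.
apply: ereal_inf_image_le_pZl; first exact: e_ratio_gt0.
move=> y hy; exists (round_x p y, round_xb p y); first exact: round_feasible.
exact: lp_obj_round_le.
Qed.
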